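(* Let $T$ be a monoidal monad on $\mathbf{Set}$, let $\Sigma$ be a signature and $\cdot\in\Sigma$ a binary operation symbol. Let $t[-]$ be a $\Sigma$-term with a single hole containing no constants (nullary operation symbols), in which no variable occurs more than once and the variable $x$ does not occur. If $T$ preserves the equation $t[x]=t[x\cdot x]$, then $T$ is relevant.
   Context: $t[N]$ denotes the term obtained by placing the term $N$ in the hole of $t$. A monoidal monad on $\mathbf{Set}$ is a monad with natural $\psi_{X,Y}\colon TX\times TY\to T(X\times Y)$ making it lax monoidal with $\psi^0=\eta_1$ and with $\eta,\mu$ monoidal (equivalently a commutative monad); $\psi^n$ is its $n$-ary version. The lifting $\widehat T\mathcal A$ of a $\Sigma$-algebra $\mathcal A$ on $A$ has carrier $TA$ and operations $T\sigma_{\mathcal A}\circ\psi^{\mathrm{ar}(\sigma)}$; $T$ preserves an equation if $\widehat T\mathcal A$ satisfies it whenever $\mathcal A$ does. $T$ is relevant if $\psi_{A,B}\circ\langle T\pi_1,T\pi_2\rangle=\mathrm{id}_{T(A\times B)}$ for all sets $A,B$. *)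

From mathcomp Require Import all_boot.

Set Implicit Arguments.
Unset Strict Implicit.
Unset Printing Implicit Defensive.

Record MonoidalMonad := {
  T : Type -> Type;
  fmap : forall A B : Type, (A -> B) -> T A -> T B;
  ret : forall A : Type, A -> T A;
  join : forall A : Type, T (T A) -> T A;
  psi : forall A B : Type, T A -> T B -> T (A * B);
  fmap_id : forall A (m : T A), fmap (fun a => a) m = m;
  fmap_comp : forall A B C (f : A -> B) (g : B -> C) (m : T A),
      fmap (fun a => g (f a)) m = fmap g (fmap f m);
  ret_nat : forall A B (f : A -> B) (a : A), fmap f (ret a) = ret (f a);
  join_nat : forall A B (f : A -> B) (mm : T (T A)),
      fmap f (join mm) = join (fmap (fmap f) mm);
  join_ret : forall A (m : T A), join (ret m) = m;
  join_fmap_ret : forall A (m : T A), join (fmap (@ret A) m) = m;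
  join_join : forall A (mmm : T (T (T A))),
      join (join mmm) = join (fmap (@join A) mmm);
  psi_nat : forall A B C D (f : A -> C) (g : B -> D) (a : T A) (b : T B),
      psi (fmap f a) (fmap g b) = fmap (fun p => (f p.1, g p.2)) (psi a b);
  (* lax monoidal: associativity and unit laws, with psi^0 = eta_1 *)
  psi_assoc : forall A B C (a : T A) (b : T B) (c : T C),
      fmap (fun p => (p.1.1, (p.1.2, p.2))) (psi (psi a b) c) = psi a (psi b c);
  psi_unitl : forall B (b : T B), fmap (fun p => p.2) (psi (ret tt) b) = b;
  psi_unitr : forall A (a : T A), fmap (fun p => p.1) (psi a (ret tt)) = a;
  (* symmetric monoidal (holds for commutative monads) *)
  psi_sym : forall A B (a : T A) (b : T B),
      fmap (fun p => (p.2, p.1)) (psi a b) = psi b a;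
  psi_ret : forall A B (a : A) (b : B), psi (ret a) (ret b) = ret (a, b);
  psi_join : forall A B (a : T (T A)) (b : T (T B)),
      psi (join a) (join b) = join (fmap (fun p => psi p.1 p.2) (psi a b))
}.

Arguments fmap M {A B} : rename.
Arguments ret M {A} : rename.
Arguments join M {A} : rename.
Arguments psi M {A B} : rename.

Lemma I0_False : 'I_0 -> False.
Proof. by case. Qed.

Definition ocons (A : Type) (n : nat) (x : A) (g : 'I_n -> A) : 'I_n.+1 -> A :=
  fun i => match unlift ord0 i with None => x | Some j => g j end.

Fixpoint psiN (M : MonoidalMonad) {A : Type} (n : nat) :
    ('I_n -> T M A) -> T M ('I_n -> A) :=
  match n return ('I_n -> T M A) -> T M ('I_n -> A) with
  | 0 => fun _ => ret M (fun i : 'I_0 => False_rect A (I0_False i))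
  | n'.+1 => fun f =>
      fmap M (fun p : A * ('I_n' -> A) => ocons p.1 p.2)
        (psi M (f ord0) (@psiN M A n' (fun i : 'I_n' => f (lift ord0 i))))
  end.

Definition relevant (M : MonoidalMonad) : Prop :=
  forall (A B : Type) (m : T M (A * B)),
    psi M (fmap M (fun p => p.1) m) (fmap M (fun p => p.2) m) = m.

Inductive term (S : Type) (ar : S -> nat) (V : Type) : Type :=
| Var : V -> term ar V
| Op : forall s : S, ('I_(ar s) -> term ar V) -> term ar V.

Arguments Var {S ar V} v.
Arguments Op {S ar V} s args.

Fixpoint occ (S : Type) (ar : S -> nat) (V : eqType) (v : V) (t : term ar V) : nat :=
  match t with
  | Var w => (w == v : nat)
  | Op s a => \sum_(i < ar s) occ v (a i)
  end.

Fixpoint no_const (S : Type) (ar : S -> nat) (V : Type) (t : term ar V) : Prop :=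
  match t with
  | Var _ => True
  | Op s a => 0 < ar s /\ forall i, no_const (a i)
  end.

Fixpoint subst (S : Type) (ar : S -> nat) (V W : Type) (f : V -> term ar W)
    (t : term ar V) : term ar W :=
  match t with
  | Var v => f v
  | Op s a => Op s (fun i => subst f (a i))
  end.

(* A term with holes: a term over [option V], the hole being [None].
   [fill t N] is t[N]. *)
Definition fill (S : Type) (ar : S -> nat) (V : Type) (t : term ar (option V))
    (N : term ar V) : term ar V :=
  subst (fun o => match o with None => N | Some v => Var v end) t.

Definition algebra (S : Type) (ar : S -> nat) (A : Type) :=
  forall s : S, ('I_(ar s) -> A) -> A.

Fixpoint eval (S : Type) (ar : S -> nat) (V A : Type) (alg : algebra ar A)
    (rho : V -> A) (t : term ar V) : A :=
  match t with
  | Var v => rho v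
  | Op s a => alg s (fun i => eval alg rho (a i))
  end.

Definition satisfies (S : Type) (ar : S -> nat) (V A : Type) (alg : algebra ar A)
    (l r : term ar V) : Prop :=
  forall rho : V -> A, eval alg rho l = eval alg rho r.

Definition lift_alg (M : MonoidalMonad) (S : Type) (ar : S -> nat) (A : Type)
    (alg : algebra ar A) : algebra ar (T M A) :=
  fun s args => fmap M (alg s) (@psiN M A (ar s) args).

Definition preserves (M : MonoidalMonad) (S : Type) (ar : S -> nat) (V : Type)
    (l r : term ar V) : Prop :=
  forall (A : Type) (alg : algebra ar A),
    satisfies alg l r -> satisfies (@lift_alg M S ar A alg) l r.

(* Interpret every operation symbol of arity n as the n-fold product in the
   rectangular band on A * B, (a, b) (a', b') = (a, b'), with a unit adjoined.
   This algebra is idempotent, so it satisfies t[x] = t[x . x].  In its lifting,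
   send x to T Some m for m : T (A * B) and every other variable to the unit
   eta None: subterms without the hole then evaluate to the unit, so t[N]
   evaluates like N.  Preservation thus gives
   T Some m = T Some (psi (T fst m) (T snd m)), and T Some is split by mu. *)

From HB Require Import structures.
From mathcomp Require Import all_boot.
From Stdlib Require Import FunctionalExtensionality.

Set Implicit Arguments.
Unset Strict Implicit.
Unset Printing Implicit Defensive.

Section MonoidalMonadFacts.

Variable M : MonoidalMonad.

Lemma psi_natr (A B C : Type) (g : B -> C) (a : T M A) (b : T M B) :
  psi M a (fmap M g b) = fmap M (fun p => (p.1, g p.2)) (psi M a b).
Proof. by rewrite -(psi_nat (fun y => y) g) fmap_id. Qed.

Lemma psi_retl (A B : Type) (a : A) (b : T M B) :
  psi M (ret M a) b = fmap M (pair a) b.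
Proof.
rewrite -(ret_nat M (fun _ : unit => a) tt) -[in LHS](fmap_id b) psi_nat.
by rewrite (fmap_comp (fun p : unit * B => p.2) (pair a)) psi_unitl.
Qed.

Lemma psi_retr (A B : Type) (a : T M A) (b : B) :
  psi M a (ret M b) = fmap M (fun y => (y, b)) a.
Proof.
rewrite -(ret_nat M (fun _ : unit => b) tt) -[in LHS](fmap_id a) psi_nat.
by rewrite (fmap_comp (fun p : A * unit => p.1) (fun y => (y, b))) psi_unitr.
Qed.

Lemma psiN_ret (A : Type) n (g : 'I_n -> A) :
  psiN (fun i => ret M (g i)) = ret M g.
Proof.
elim: n g => [|n IH] g /=.
  by congr (ret M _); apply: functional_extensionality => -[].
rewrite IH psi_ret ret_nat; congr (ret M _).
by apply: functional_extensionality => i; rewrite /ocons; case: unliftP => [j|] ->.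
Qed.

Lemma psiN_single (A : Type) n (i : 'I_n) (u : T M A) (g : 'I_n -> A) :
  psiN (fun j => if j == i then u else ret M (g j))
  = fmap M (fun y j => if j == i then y else g j) u.
Proof.
elim: n i g => [|n IH] i g; first by case: i.
rewrite /=; case: (unliftP ord0 i) => [i' ->|->].
  rewrite (negbTE (neq_lift ord0 i')) (IH i' (fun j => g (lift ord0 j))).
  rewrite psi_retl -!fmap_comp; congr (fmap M _ u).
  apply: functional_extensionality => y; apply: functional_extensionality => j.
  rewrite /ocons; case: (unliftP ord0 j) => [j' ->|->].
    by rewrite (inj_eq (@lift_inj _ ord0)).
  by rewrite (negbTE (neq_lift ord0 i')).
rewrite eqxx.
have -> : (fun j : 'I_n => if lift ord0 j == ord0 then u else ret M (g (lift ord0 j)))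
    = (fun j => ret M (g (lift ord0 j))).
  by apply: functional_extensionality => j; rewrite eq_sym (negbTE (neq_lift ord0 j)).
rewrite psiN_ret psi_retr -!fmap_comp; congr (fmap M _ u).
apply: functional_extensionality => y; apply: functional_extensionality => j.
rewrite /ocons; case: (unliftP ord0 j) => [j' ->|->]; last by rewrite eqxx.
by rewrite eq_sym (negbTE (neq_lift ord0 j')).
Qed.

Lemma fmap_Some_inj (A : Type) : injective (fmap M (@Some A)).
Proof.
move=> k1 k2 E.
have retract k : join M (fmap M (oapp (ret M) k1) (fmap M Some k)) = k.
  by rewrite -fmap_comp join_fmap_ret.
by rewrite -(retract k1) E retract.
Qed.

End MonoidalMonadFacts.

Section RectangularBand.

Variables A B : Type.

Definition rect_mul (u v : option (A * B)) : option (A * B) :=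
  match u, v with
  | None, _ => v
  | _, None => u
  | Some p, Some q => Some (p.1, q.2)
  end.

Lemma rect_mulA : associative rect_mul.
Proof. by move=> [[? ?]|] [[? ?]|] [[? ?]|]. Qed.

Lemma rect_mul1u : left_id None rect_mul.
Proof. by []. Qed.

Lemma rect_mulu1 : right_id None rect_mul.
Proof. by move=> [[? ?]|]. Qed.

Lemma rect_mulxx (u : option (A * B)) : rect_mul u u = u.
Proof. by case: u => [[]|]. Qed.

HB.instance Definition _ :=
  Monoid.isLaw.Build (option (A * B)) None rect_mul rect_mulA rect_mul1u rect_mulu1.

Lemma rect_prod_single n (i : 'I_n) (u : option (A * B)) :
  \big[rect_mul/None]_(j < n) (if j == i then u else None) = u.
Proof. by rewrite -big_mkcond big_pred1_eq. Qed.

Lemma rect_prod_const n (u : option (A * B)) :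
  0 < n -> \big[rect_mul/None]_(j < n) u = u.
Proof.
case: n => // n _; elim: n => [|n IH]; first by rewrite big_ord_recl big_ord0 rect_mulu1.
by rewrite big_ord_recl IH rect_mulxx.
Qed.

End RectangularBand.

Section Terms.

Variables (S : Type) (ar : S -> nat).

Lemma leq_occ_arg (W : eqType) (w : W) s (a : 'I_(ar s) -> term ar W) i :
  occ w (a i) <= occ w (Op s a).
Proof. by rewrite /= (bigD1 i) //= leq_addr. Qed.

Lemma eval_subst (V W X : Type) (alg : algebra ar X) (rho : W -> X)
    (f : V -> term ar W) (t : term ar V) :
  eval alg rho (subst f t) = eval alg (fun v => eval alg rho (f v)) t.
Proof.
elim: t => [v|s a IH] //=.
by congr (alg s _); apply: functional_extensionality => i; exact: IH.
Qed.

Lemma eval_fill (V X : Type) (alg : algebra ar X) (rho : V -> X)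
    (t : term ar (option V)) (N : term ar V) :
  eval alg rho (fill t N) = eval alg (oapp rho (eval alg rho N)) t.
Proof.
rewrite /fill eval_subst; congr (eval alg _ t).
by apply: functional_extensionality => -[].
Qed.

Lemma satisfies_fill (V X : Type) (alg : algebra ar X)
    (t : term ar (option V)) (l r : term ar V) :
  satisfies alg l r -> satisfies alg (fill t l) (fill t r).
Proof. by move=> lr rho; rewrite !eval_fill (lr rho). Qed.

End Terms.

Section LiftedRectangularBand.

Variables (M : MonoidalMonad) (S : Type) (ar : S -> nat) (A B : Type).

Definition rect_alg : algebra ar (option (A * B)) :=
  fun s a => \big[@rect_mul A B/None]_(i < ar s) a i.

Local Notation lifted := (@lift_alg M S ar _ rect_alg).

Lemma rect_alg_idem (V : Type) (x : V) s : 0 < ar s ->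
  satisfies rect_alg (Var x) (Op s (fun _ => Var x)).
Proof. by move=> s_gt0 rho; rewrite /= /rect_alg rect_prod_const. Qed.

Lemma eval_lift_rect_unit (W : eqType) (sigma : W -> T M (option (A * B)))
    (t : term ar W) :
  (forall w, 0 < occ w t -> sigma w = ret M None) ->
  eval lifted sigma t = ret M None.
Proof.
elim: t => [v|s a IH] /= sigma_unit; first by apply: sigma_unit; rewrite eqxx.
have -> : (fun i => eval lifted sigma (a i)) = (fun i => ret M None).
  apply: functional_extensionality => i; apply: IH => w occ_w.
  exact/sigma_unit/(leq_trans occ_w)/leq_occ_arg.
by rewrite /lift_alg (psiN_ret _ (fun _ => None)) ret_nat /rect_alg big1_eq.
Qed.

Lemma eval_lift_rect_linear (W : eqType) (sigma : W -> T M (option (A * B)))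
    (w0 : W) (t : term ar W) :
  occ w0 t = 1 ->
  (forall w, w != w0 -> 0 < occ w t -> sigma w = ret M None) ->
  eval lifted sigma t = sigma w0.
Proof.
elim: t => [v|s a IH] /=; first by case: eqP => // ->.
move=> /eqP/sum_nat_eq1 [i [_ occ_i occ_j]] sigma_unit.
have -> : (fun j => eval lifted sigma (a j))
    = (fun j => if j == i then sigma w0 else ret M None).
  apply: functional_extensionality => j; case: eqP => [->|/eqP ne_ji].
    by apply: IH => // w ne_w occ_w; apply/sigma_unit/(leq_trans occ_w)/leq_occ_arg.
  apply: eval_lift_rect_unit => w occ_w; apply: sigma_unit.
    by apply: contraTneq occ_w => ->; rewrite occ_j.
  exact/(leq_trans occ_w)/leq_occ_arg.
rewrite /lift_alg (psiN_single _ _ (fun _ => None)) -fmap_comp -[RHS]fmap_id.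
by congr (fmap M _ _); apply: functional_extensionality => u; apply: rect_prod_single.
Qed.

Lemma lift_rect_alg_diag s (m : T M (A * B)) : ar s = 2 ->
  lifted (fun _ : 'I_(ar s) => fmap M Some m)
  = fmap M Some (psi M (fmap M (fun p => p.1) m) (fmap M (fun p => p.2) m)).
Proof.
rewrite /lift_alg /rect_alg; move: (ar s) => n -> /=.
rewrite psi_retr psi_natr -!fmap_comp psi_nat -!fmap_comp psi_nat -fmap_comp.
congr (fmap M _ _); apply: functional_extensionality => p.
by rewrite !big_ord_recl big_ord0 /ocons unlift_none liftK /= unlift_none.
Qed.

End LiftedRectangularBand.

Theorem theorem5 (M : MonoidalMonad) (S : Type) (ar : S -> nat)
    (mul : S) (Hmul : ar mul = 2)
    (V : eqType) (t : term ar (option V)) (x : V)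
    (Hhole : occ None t = 1)
    (Hlin : forall v : V, occ (Some v) t <= 1)
    (Hx : occ (Some x) t = 0)
    (Hnc : no_const t)
    (Hpres : preserves M (fill t (Var x))
                         (fill t (Op mul (fun _ : 'I_(ar mul) => Var x)))) :
  relevant M.
Proof.
move=> A B m.
pose alg := @rect_alg S ar A B.
have alg_sat : satisfies alg (fill t (Var x)) (fill t (Op mul (fun _ => Var x))).
  by apply/satisfies_fill/rect_alg_idem; rewrite Hmul.
pose rho v := if v == x then fmap M Some m else ret M None.
have eval_fill_lifted (N : term ar V) :
    eval (@lift_alg M _ _ _ alg) rho (fill t N) = eval (@lift_alg M _ _ _ alg) rho N.
  rewrite eval_fill (eval_lift_rect_linear Hhole) // => -[v|] // _ occ_v.
  by rewrite /= /rho; case: eqP occ_v => // ->; rewrite Hx.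
have := Hpres _ alg alg_sat rho; rewrite !eval_fill_lifted /= /rho eqxx.
by rewrite lift_rect_alg_diag // => /fmap_Some_inj.
Qed.
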